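(* Let $G$ be a non-regular simple graph on $n$ vertices such that $F_k(G)$ is regular for some integer $k$ with $2\le k\le n-2$. Then $G$ is isomorphic to the star $K_{1,n-1}$ or to its complement $\overline{K_{1,n-1}}$, and in both cases $k=n/2$.
   Context: For a simple graph $G=(V,E)$ on $n$ vertices and an integer $1\le k<n$, the $k$-token graph $F_k(G)$ is the graph whose vertices are all $k$-element subsets of $V$, two such subsets $A,B$ being adjacent whenever their symmetric difference $A\triangle B$ is a pair $\{a,b\}$ with $a$ adjacent to $b$ in $G$. *)

From mathcomp Require Import all_boot.
Set Implicit Arguments. Unset Strict Implicit. Unset Printing Implicit Defensive.

Definition simple_graph (n : nat) (e : rel 'I_n) : Prop :=
  (forall u v, e u v = e v u) /\ (forall u, ~~ e u u).

Definition regular (T : finType) (e : rel T) : Prop :=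
  exists d : nat, forall v : T, #|[set w | e v w]| = d.

Definition symdiff (T : finType) (A B : {set T}) : {set T} :=
  (A :\: B) :|: (B :\: A).

Definition token_adj (T : finType) (e : rel T) (A B : {set T}) : bool :=
  [exists a : T, exists b : T, e a b && (symdiff A B == [set a; b])].

Definition token_graph_regular (T : finType) (e : rel T) (k : nat) : Prop :=
  exists d : nat, forall A : {set T}, #|A| = k ->
    #|[set B : {set T} | (#|B| == k) && token_adj e A B]| = d.

Definition star_rel (n : nat) : rel 'I_n :=
  fun u v => (u != v) && ((val u == 0) || (val v == 0)).
Definition costar_rel (n : nat) : rel 'I_n :=
  fun u v => (u != v) && ~~ star_rel u v.

Definition isomorphic (n : nat) (e e' : rel 'I_n) : Prop :=
  exists f : 'I_n -> 'I_n, bijective f /\ forall u v, e u v = e' (f u) (f v).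

From mathcomp Require Import all_boot zify perm.
Set Implicit Arguments. Unset Strict Implicit. Unset Printing Implicit Defensive.

(* The degree of a k-set A in F_k(G) is the number cut(A) of edges of G leaving A,
   and adding a vertex p to a set Y raises the cut by deg p - 2 |N(p) :&: Y|.
   Comparing the four k-sets s+x+S, t+x+S, s+y+S, t+y+S, for S a (k-2)-set avoiding
   x, y, s, t, regularity of F_k(G) forces e(s,x) + e(t,y) = e(s,y) + e(t,x) whenever
   {x,y} and {s,t} are disjoint.  If G is not regular some u is adjacent to some v
   but not to some w; the identity then makes v adjacent to every other vertex, w to
   none, and any two remaining vertices adjacent iff v and w are not: G is a star
   centred at v or a co-star centred at w.  Comparing c+X and b+X, for the centre c,
   another vertex b and a (k-1)-set X, finally gives n = 2k. *)

Lemma exists_disjoint_card (T : finType) (D : {set T}) m :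
  m + #|D| <= #|T| -> exists2 X : {set T}, [disjoint X & D] & #|X| = m.
Proof.
rewrite -(cardsC D) addnC leq_add2l; elim: m => [|m IHm] lt_mDC.
  by exists set0; rewrite ?disjoints_subset ?sub0set ?cards0.
have [X XD cardX] := IHm (ltnW lt_mDC); rewrite disjoints_subset in XD.
have : 0 < #|~: D :\: X| by rewrite cardsD (setIidPr XD) cardX subn_gt0.
case/card_gt0P => z; rewrite inE => /andP [zNX zD].
exists (z |: X); last by rewrite cardsU1 zNX cardX.
by rewrite disjoints_subset subUset sub1set zD XD.
Qed.

Section SymmetricDifference.

Variable T : finType.
Implicit Types (A B : {set T}) (a b : T).

Lemma symdiffC A B : symdiff A B = symdiff B A.
Proof. exact: setUC. Qed.

Lemma symdiff_exchange A B a b : #|A| = #|B| -> a != b ->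
  symdiff A B = [set a; b] -> a \in A -> b \notin A /\ B = b |: (A :\ a).
Proof.
move=> eq_AB ab sdAB aA.
have inAB z : (z \in A) (+) (z \in B) = (z == a) || (z == b).
  have := congr1 (fun S : {set T} => z \in S) sdAB; rewrite /= !inE.
  by case: (z \in A); case: (z \in B).
have aNB : a \notin B by have := inAB a; rewrite eqxx aA; case: (a \in B).
have bNA : b \notin A.
  apply/negP => bA.
  have bNB : b \notin B by have := inAB b; rewrite eqxx orbT bA; case: (b \in B).
  have BsubA : B \subset A :\: [set a; b].
    apply/subsetP => z zB; rewrite !inE; have := inAB z; rewrite zB.
    case: (z \in A) => //= [<- // | /esym /orP zab].
    by case: zab => /eqP eqz; move: zB; rewrite eqz ?(negbTE aNB) ?(negbTE bNB).
  have abA : [set a; b] \subset A by rewrite subUset !sub1set aA bA.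
  have := subset_leq_card BsubA; have := subset_leq_card abA.
  by rewrite cardsD (setIidPr abA) cards2 ab -eq_AB; lia.
split=> //; apply/setP => z; rewrite !inE.
have [->|za] := eqVneq z a; first by rewrite (negbTE aNB) (negbTE ab).
have := inAB z; rewrite (negbTE za) /=.
have [->|zb] := eqVneq z b; first by rewrite (negbTE bNA); case: (b \in B).
by case: (z \in A); case: (z \in B).
Qed.

End SymmetricDifference.

Definition star_at (T : eqType) (c : T) : rel T :=
  fun a b => (a != b) && ((a == c) || (b == c)).

Definition costar_at (T : eqType) (c : T) : rel T :=
  fun a b => (a != b) && ~~ ((a == c) || (b == c)).

Section TokenGraph.

Variables (T : finType) (e : rel T).
Hypotheses (e_sym : forall u v, e u v = e v u) (e_irr : forall u, ~~ e u u).
Implicit Types (A B S X : {set T}) (a b c p q : T).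

Definition nbr c : {set T} := [set b | e c b].

Definition cut A : nat := \sum_(a in A) #|nbr a :\: A|.

Definition edges_out A : {set T * T} :=
  [set p | [&& p.1 \in A, p.2 \notin A & e p.1 p.2]].

Lemma card_nbrI_setU1 p q S : q \notin S ->
  #|nbr p :&: (q |: S)| = e p q + #|nbr p :&: S|.
Proof.
move=> qNS; rewrite (cardsD1 q) !inE eqxx /= andbT; congr (_ + _).
apply: eq_card => z; rewrite !inE.
by have [->|] //= := eqVneq z q; rewrite (negbTE qNS) andbF.
Qed.

Lemma cut_setU1 a X : a \notin X ->
  cut (a |: X) + 2 * #|nbr a :&: X| = cut X + #|nbr a|.
Proof.
move=> aNX; rewrite /cut big_setU1 //=.
have -> : nbr a :\: (a |: X) = nbr a :\: X.
  apply/setP => z; rewrite !inE negb_or.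
  by have [->|za] := eqVneq z a; rewrite ?(negbTE (e_irr a)) ?andbF.
have out_a c : c \in X -> #|nbr c :\: X| = e c a + #|nbr c :\: (a |: X)|.
  move=> cX; rewrite (cardsD1 a) !inE aNX /=; congr (_ + _).
  by apply: eq_card => z; rewrite !inE; case: (z == a); case: (e c z).
rewrite (eq_bigr _ out_a) big_split /= -(cardsID X (nbr a)) setIC.
have -> : \sum_(c in X) e c a = #|X :&: nbr a|.
  rewrite -sum1_card big_mkcond [RHS]big_mkcond /=; apply: eq_bigr => c _.
  by rewrite !inE e_sym; case: (c \in X); case: (e a c).
lia.
Qed.

Lemma cut_edges_out A : cut A = #|edges_out A|.
Proof.
transitivity (\sum_(a : T) \sum_(b : T) ((a \in A) && (b \notin A) && e a b : nat)).
  rewrite /cut big_mkcond; apply: eq_bigr => a _.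
  case: (a \in A) => /=; last by rewrite big1.
  rewrite -sum1_card big_mkcond; apply: eq_bigr => b _; rewrite !inE andbC.
  by case: (_ && _).
rewrite pair_big /= -sum1_card [RHS]big_mkcond; apply: eq_bigr => -[a b] _.
by rewrite inE /= andbA; case: (_ && _ && _).
Qed.

Definition exchange A (p : T * T) : {set T} := p.2 |: (A :\ p.1).

Lemma token_nbrsE A :
  [set B : {set T} | (#|B| == #|A|) && token_adj e A B] = exchange A @: edges_out A.
Proof.
apply/setP => B; rewrite inE; apply/andP/imsetP.
  case=> /eqP eq_BA /existsP [a /existsP [b /andP [eab /eqP sdAB]]].
  have ab : a != b by apply: contraTneq eab => ->.
  have [aA | aNA] := boolP (a \in A).
    have [bNA ->] := symdiff_exchange (esym eq_BA) ab sdAB aA.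
    by exists (a, b); rewrite // inE /= aA bNA eab.
  have aB : a \in B.
    by move: (set21 a b); rewrite -sdAB !inE (negbTE aNA) andbF.
  have [_ eq_A] := symdiff_exchange eq_BA ab (etrans (symdiffC B A) sdAB) aB.
  have bA : b \in A by rewrite eq_A setU11.
  have sdAB' : symdiff A B = [set b; a] by rewrite sdAB setUC.
  have ba : b != a by rewrite eq_sym.
  have [_ ->] := symdiff_exchange (esym eq_BA) ba sdAB' bA.
  by exists (b, a); rewrite // inE /= aNA bA e_sym eab.
case=> -[a b]; rewrite inE /= => /and3P [aA bNA eab] ->.
have ba : b != a by apply: contraNneq bNA => ->.
split; first by rewrite cardsU1 !inE negb_and bNA orbT (cardsD1 a A) aA.
apply/existsP; exists a; apply/existsP; exists b; rewrite eab /=.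
apply/eqP/setP => z; rewrite /exchange /symdiff !inE /=.
have [->|za] := eqVneq z a; first by rewrite aA eq_sym (negbTE ba).
by have [->|zb] := eqVneq z b; rewrite ?(negbTE bNA) //=; case: (z \in A).
Qed.

Lemma exchange_inj A : {in edges_out A &, injective (exchange A)}.
Proof.
move=> [a b] [a' b']; rewrite !inE /= => /and3P [aA bNA _] /and3P [a'A b'NA _].
rewrite /exchange /= => eq_ex.
have : b \in b' |: (A :\ a') by rewrite -eq_ex setU11.
rewrite !inE (negbTE bNA) andbF orbF => /eqP eq_b; rewrite -eq_b in eq_ex *.
have : a \notin b |: (A :\ a').
  by rewrite -eq_ex !inE eqxx /= orbF; apply: contraNneq bNA => <-.
by rewrite !inE aA andbT negb_or negbK => /andP [_ /eqP ->].
Qed.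

Lemma token_deg_cut A :
  #|[set B : {set T} | (#|B| == #|A|) && token_adj e A B]| = cut A.
Proof. by rewrite token_nbrsE card_in_imset ?cut_edges_out //; exact: exchange_inj. Qed.

Section ConstantCut.

Variables k d : nat.
Hypothesis cut_const : forall A, #|A| = k -> cut A = d.

Lemma card_nbr_exchange b c X : b \notin X -> c \notin X -> #|X|.+1 = k ->
  #|nbr c| + 2 * #|nbr b :&: X| = #|nbr b| + 2 * #|nbr c :&: X|.
Proof.
move=> bNX cNX cardX.
have cut_bX : cut (b |: X) = d by rewrite cut_const // cardsU1 bNX.
have cut_cX : cut (c |: X) = d by rewrite cut_const // cardsU1 cNX.
have := cut_setU1 bNX; have := cut_setU1 cNX; rewrite cut_bX cut_cX; lia.
Qed.

Lemma adj_exchange_avoiding x y s t S :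
  x != s -> x != t -> y != s -> y != t ->
  [disjoint S & [set x; y; s; t]] -> #|S|.+2 = k ->
  e s x + e t y = e s y + e t x.
Proof.
move=> xs xt ys yt SD cardS.
have notS z : z \in [set x; y; s; t] -> z \notin S.
  by move=> zD; rewrite (disjointFl SD zD).
have [xNS yNS sNS tNS] : [/\ x \notin S, y \notin S, s \notin S & t \notin S].
  by split; apply: notS; rewrite !inE eqxx ?orbT.
have notU z w : w != z -> z \notin S -> z \notin w |: S.
  by move=> wz zNS; rewrite !inE negb_or eq_sym wz.
have cardU z : z \notin S -> #|z |: S|.+1 = k by move=> zNS; rewrite cardsU1 zNS.
have := card_nbr_exchange (notU _ _ xs sNS) (notU _ _ xt tNS) (cardU _ xNS).
have := card_nbr_exchange (notU _ _ ys sNS) (notU _ _ yt tNS) (cardU _ yNS).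
rewrite !card_nbrI_setU1 //.
move: #|nbr s| #|nbr t| #|nbr s :&: S| #|nbr t :&: S| => ds dt ns nt.
move: (e s x : nat) (e s y : nat) (e t x : nat) (e t y : nat) => sx sy tx ty; lia.
Qed.

Lemma adj_exchange x y s t : 2 <= k -> k + 2 <= #|T| ->
  x != s -> x != t -> y != s -> y != t ->
  e s x + e t y = e s y + e t x.
Proof.
move=> k_ge2 k_le xs xt ys yt.
have [|S SD cardS] := @exists_disjoint_card T [set x; y; s; t] (k - 2).
  have : #|[set x; y; s; t]| <= 4 by rewrite !cardsU !cards1; lia.
  lia.
by apply: (adj_exchange_avoiding xs xt ys yt SD); rewrite cardS; lia.
Qed.

Lemma exists_exchange_set c : 0 < k < #|T| ->
  exists b, exists2 X : {set T}, [/\ b != c, b \notin X & c \notin X] & #|X|.+1 = k.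
Proof.
case/andP=> k_gt0 k_lt.
have [b] : exists b, b \in [set~ c].
  by apply/card_gt0P; rewrite cardsC1; lia.
rewrite !inE => bc.
have [|X XD cardX] := @exists_disjoint_card T [set b; c] k.-1.
  by rewrite cards2 bc; lia.
exists b, X; last lia.
by split; rewrite // (disjointFl XD) // !inE eqxx ?orbT.
Qed.

Lemma star_token_regular_half c : e =2 star_at c -> 0 < k < #|T| -> k.*2 = #|T|.
Proof.
move=> e_star /(exists_exchange_set c) [b [X [bc bNX cNX] cardX]].
have := card_nbr_exchange bNX cNX cardX.
have -> : nbr c = [set~ c].
  by apply/setP => z; rewrite !inE e_star /star_at eqxx /= andbT eq_sym.
have -> : nbr b = [set c].
  apply/setP => z; rewrite !inE e_star /star_at (negbTE bc) /=.
  by have [->|_] := eqVneq z c; rewrite ?eqxx ?bc ?andbF.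
have -> : [set c] :&: X = set0.
  by apply/setP => z; rewrite !inE; case: (z =P c) => [->|]; rewrite ?(negbTE cNX).
have -> : [set~ c] :&: X = X.
  by apply/setIidPr/subsetP => z zX; rewrite !inE; apply: contraNneq cNX => <-.
rewrite cardsC1 cards1 cards0; lia.
Qed.

Lemma costar_token_regular_half c : e =2 costar_at c -> 0 < k < #|T| -> k.*2 = #|T|.
Proof.
move=> e_costar /(exists_exchange_set c) [b [X [bc bNX cNX] cardX]].
have := card_nbr_exchange bNX cNX cardX.
have -> : nbr c = set0 by apply/setP => z; rewrite !inE e_costar /costar_at eqxx andbF.
have nbr_b : nbr b = [set~ c] :\ b.
  apply/setP => z; rewrite !inE e_costar /costar_at (negbTE bc) eq_sym.
  by case: (z == b); case: (z == c).
have -> : nbr b :&: X = X.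
  apply/setIidPr/subsetP => z zX; rewrite nbr_b !inE.
  by apply/andP; split; [apply: contraNneq bNX | apply: contraNneq cNX] => <-.
have := cardsD1 b [set~ c]; rewrite !inE bc cardsC1 cards0 nbr_b set0I cards0; lia.
Qed.

End ConstantCut.

Lemma card_nbr_eq p q : p != q -> (forall r, r != p -> r != q -> e p r = e q r) ->
  #|nbr p| = #|nbr q|.
Proof.
move=> pq epq; rewrite (cardsD1 q) (cardsD1 p (nbr q)) !inE e_sym; congr (_ + _).
apply: eq_card => z; rewrite !inE.
have [->|zp] := eqVneq z p; first by rewrite (negbTE (e_irr p)) andbF.
have [->|zq] := eqVneq z q; first by rewrite (negbTE (e_irr q)) andbF.
by rewrite epq.
Qed.

Lemma not_regular_witness : ~ regular e ->
  exists u v w, [/\ u != v, u != w, v != w, e u v & ~~ e u w].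
Proof.
move=> nreg.
have [[p q] /= dpq | same_deg] := pickP (fun pq : T * T => #|nbr pq.1| != #|nbr pq.2|);
  last first.
  case: nreg; have [z0 _ | T0] := pickP T; last by exists 0 => v; have := T0 v.
  by exists #|nbr z0| => v; have := same_deg (v, z0) => /negbFE /eqP.
have pq : p != q by apply: contraNneq dpq => ->.
have [r /and3P [rp rq epqr] | same_nbr] :=
  pickP (fun r => [&& r != p, r != q & e p r != e q r]); last first.
  case/eqP: dpq; apply: card_nbr_eq => // r rp rq.
  by apply/eqP; have := same_nbr r; rewrite rp rq /= => /negbFE.
have [epr | nepr] := boolP (e p r).
  exists r, p, q; rewrite rp rq pq !(e_sym r) epr.
  by move: epqr; rewrite epr; case: (e q r).
exists r, q, p; rewrite rp rq eq_sym pq !(e_sym r) (negbTE nepr).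
by move: epqr; rewrite (negbTE nepr); case: (e q r).
Qed.

Section Classification.

Hypothesis adj_exch : forall x y s t, x != s -> x != t -> y != s -> y != t ->
  e s x + e t y = e s y + e t x.

Lemma star_or_costar u v w : u != v -> u != w -> v != w -> e u v -> ~~ e u w ->
  exists c, e =2 star_at c \/ e =2 costar_at c.
Proof.
move=> uv uw vw euv neuw.
have hub s : s != v -> s != w -> e v s && ~~ e w s.
  move=> sv sw; have := adj_exch uv uw sv sw.
  rewrite (e_sym v u) euv (e_sym w u) (negbTE neuw).
  by case: (e v s); case: (e w s).
have adj_v s : s != v -> s != w -> e v s by move=> sv sw; case/andP: (hub s sv sw).
have adj_w s : s != v -> s != w -> e w s = false.
  by move=> sv sw; case/andP: (hub s sv sw) => _ /negbTE.
have adj_rest s t : s != t -> s != v -> s != w -> t != v -> t != w -> e s t = ~~ e v w.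
  move=> st sv sw tv tw.
  have ts : t != s by rewrite eq_sym.
  have wv : w != v by rewrite eq_sym.
  have ws : w != s by rewrite eq_sym.
  have := adj_exch tv ts wv ws; rewrite adj_v // (e_sym s w) adj_w //.
  by case: (e v w); case: (e s t).
have wv : w != v by rewrite eq_sym.
have [vwF wvF] : (v == w) = false /\ (w == v) = false by rewrite (negbTE vw) (negbTE wv).
have adjE a b : e a b = if e v w then star_at v a b else costar_at w a b.
  rewrite /star_at /costar_at.
  have [<- | ab] := eqVneq a b; first by rewrite (negbTE (e_irr a)); case: (e v w).
  have ba : b != a by rewrite eq_sym.
  case: (eqVneq a v) ba => [-> | av] ba.
    have [-> | bw] := eqVneq b w; first by rewrite ?vwF ?wvF; case: (e v w).
    by rewrite adj_v // ?vwF ?wvF; case: (e v w).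
  case: (eqVneq a w) ba => [-> | aw] ba.
    have [-> | bv] := eqVneq b v; first by rewrite e_sym ?vwF ?wvF; case: (e v w).
    by rewrite adj_w //; case: (e v w).
  have [-> | bv] := eqVneq b v; first by rewrite e_sym adj_v // ?vwF ?wvF; case: (e v w).
  have [-> | bw] := eqVneq b w; first by rewrite e_sym adj_w // ?vwF ?wvF; case: (e v w).
  by rewrite adj_rest //; case: (e v w).
by case evw: (e v w); [exists v; left | exists w; right] => a b; rewrite adjE evw.
Qed.

End Classification.

End TokenGraph.

Lemma star_at_perm (T : finType) (s : {perm T}) c a b :
  star_at (s c) (s a) (s b) = star_at c a b.
Proof. by rewrite /star_at !(inj_eq perm_inj). Qed.

Lemma costar_at_perm (T : finType) (s : {perm T}) c a b :
  costar_at (s c) (s a) (s b) = costar_at c a b.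
Proof. by rewrite /costar_at !(inj_eq perm_inj). Qed.

Lemma star_relE n (z : 'I_n) : val z = 0 -> @star_rel n =2 star_at z.
Proof. by move=> z0 a b; rewrite /star_rel /star_at -z0 !val_eqE. Qed.

Lemma costar_relE n (z : 'I_n) : val z = 0 -> @costar_rel n =2 costar_at z.
Proof.
by move=> z0 a b; rewrite /costar_rel (star_relE z0) /star_at /costar_at; case: (a != b).
Qed.

Lemma isomorphic_star n (e : rel 'I_n) c : e =2 star_at c -> isomorphic e (@star_rel n).
Proof.
move=> e_star; pose z : 'I_n := Ordinal (leq_ltn_trans (leq0n c) (ltn_ord c)).
exists (tperm c z); split; first exact/injF_bij/perm_inj.
move=> a b; rewrite e_star (star_relE (z := z)) //.
by rewrite -(star_at_perm (tperm c z)) tpermL.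
Qed.

Lemma isomorphic_costar n (e : rel 'I_n) c :
  e =2 costar_at c -> isomorphic e (@costar_rel n).
Proof.
move=> e_costar; pose z : 'I_n := Ordinal (leq_ltn_trans (leq0n c) (ltn_ord c)).
exists (tperm c z); split; first exact/injF_bij/perm_inj.
move=> a b; rewrite e_costar (costar_relE (z := z)) //.
by rewrite -(costar_at_perm (tperm c z)) tpermL.
Qed.

Theorem theorem4 (n : nat) (e : rel 'I_n) (k : nat) :
  simple_graph e ->
  ~ regular e ->
  2 <= k <= n - 2 ->
  token_graph_regular e k ->
  (isomorphic e (@star_rel n) \/ isomorphic e (@costar_rel n)) /\ k.*2 = n.
Proof.
move=> [e_sym e_irr] nreg /andP [k_ge2 k_le] [d token_deg].
have cut_const (A : {set 'I_n}) : #|A| = k -> cut e A = d.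
  by move=> cardA; rewrite -(token_deg_cut e_sym e_irr) cardA token_deg.
have k_add2_le : k + 2 <= #|'I_n| by rewrite card_ord; lia.
have k_lt : 0 < k < #|'I_n| by rewrite card_ord; lia.
have adj_exch := adj_exchange e_sym e_irr cut_const k_ge2 k_add2_le.
have [u [v [w [uv uw vw euv neuw]]]] := not_regular_witness e_sym e_irr nreg.
have [c [e_star | e_costar]] := star_or_costar e_sym e_irr adj_exch uv uw vw euv neuw.
  split; first by left; exact: isomorphic_star e_star.
  by rewrite (star_token_regular_half e_sym e_irr cut_const e_star k_lt) card_ord.
split; first by right; exact: isomorphic_costar e_costar.
by rewrite (costar_token_regular_half e_sym e_irr cut_const e_costar k_lt) card_ord.
Qed.
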